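(* Consider the iteration: start from any $(\underline p^{(0)},\underline\psi^{(0)})\in\mathcal F$; at step $t$, set $\mu^{(t)}_{lk}=\beta_{llk}\sqrt{p^{(t)}_{lk}}\,D_l^{-1}\psi^{(t)}_{lk}$ (with $D_l$ evaluated at $(\underline p^{(t)},\underline\psi^{(t)})$), and then let $(\underline p^{(t+1)},\underline\psi^{(t+1)})$ be a maximizer of $f(\cdot,\cdot,\underline\mu^{(t)})$ over $\mathcal F$. Then the weighted sum MSE $\sum_{(l,k)}\alpha_{lk}\mathsf{MSE}_{lk}$ evaluated at $(\underline p^{(t)},\underline\psi^{(t)})$ is nonincreasing in $t$.
   Context: $L$ cells indexed by $l,i$, each with $K$ users indexed by $k,j$, $K\le\tau$; sums over $(i,j)$ or $(l,k)$ range over all $LK$ users. $M$ antennas per base station; noise variance $\sigma^2>0$; power budget $P_{\max}>0$; large-scale fading $\beta_{lij}>0$; weights $\alpha_{lk}>0$. $\{\varphi_1,\dots,\varphi_\tau\}\subset\mathbb C^\tau$ satisfy $\varphi_s^H\varphi_t=\tau$ if $s=t$ and $0$ otherwise. The feasible set $\mathcal F$ consists of $(\underline p,\underline\psi)$ with $0\le p_{lk}\le P_{\max}$, $\psi_{lk}\in\{\varphi_1,\dots,\varphi_\tau\}$, and $\psi_{lk}\ne\psi_{lk'}$ for $k\ne k'$. Pilot of user $(l,k)$ is $\phi_{lk}=\sqrt{p_{lk}}\psi_{lk}$. $D_l=\sigma^2I_\tau+\sum_{(i,j)}\beta_{lij}p_{ij}\psi_{ij}\psi_{ij}^H$; $\mathsf{MSE}_{lk}=M\beta_{llk}-M\beta_{llk}^2p_{lk}\psi_{lk}^HD_l^{-1}\psi_{lk}$;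 $f(\underline p,\underline\psi,\underline\mu)=\sum_{(l,k)}\alpha_{lk}\big(2\beta_{llk}\sqrt{p_{lk}}\Re\{\mu_{lk}^H\psi_{lk}\}-\mu_{lk}^HD_l\mu_{lk}\big)$ with $\mu_{lk}\in\mathbb C^\tau$. *)

(* The complex field is modelled by an arbitrary
   numClosedFieldType C (e.g. algC); real quantities are elements of C
   that are compared with the partial order of C (0 <= x forces x real). *)
From HB Require Import structures.
From mathcomp Require Import all_boot all_order all_algebra.
Set Implicit Arguments. Unset Strict Implicit. Unset Printing Implicit Defensive.
Import Order.TTheory GRing.Theory Num.Theory.
Local Open Scope ring_scope.

Section Pilot.
Variable C : numClosedFieldType.

Definition hermT (m n : nat) (A : 'M[C]_(m, n)) : 'M[C]_(n, m) :=
  (map_mx Num.conj A)^T.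

Definition qform (n : nat) (u : 'cV[C]_n) (A : 'M[C]_n) (v : 'cV[C]_n) : C :=
  (hermT u *m A *m v) 0 0.

Definition pilot_basis (tau : nat) (phi : 'I_tau -> 'cV[C]_tau) : Prop :=
  forall s t : 'I_tau,
    (hermT (phi s) *m phi t) 0 0 = if s == t then tau%:R else 0.

Definition feasible (L K tau : nat) (Pmax : C) (phi : 'I_tau -> 'cV[C]_tau)
    (p : 'I_L -> 'I_K -> C) (psi : 'I_L -> 'I_K -> 'cV[C]_tau) : Prop :=
  (forall l k, 0 <= p l k /\ p l k <= Pmax) /\
  (forall l k, exists s : 'I_tau, psi l k = phi s) /\
  (forall l k k', k != k' -> psi l k != psi l k').

Definition Dmat (L K tau : nat) (sigma2 : C) (beta : 'I_L -> 'I_L -> 'I_K -> C)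
    (p : 'I_L -> 'I_K -> C) (psi : 'I_L -> 'I_K -> 'cV[C]_tau) (l : 'I_L)
    : 'M[C]_tau :=
  sigma2%:M + \sum_(i < L) \sum_(j < K)
      (beta l i j * p i j) *: (psi i j *m hermT (psi i j)).

Definition MSE (L K tau M : nat) (sigma2 : C) (beta : 'I_L -> 'I_L -> 'I_K -> C)
    (p : 'I_L -> 'I_K -> C) (psi : 'I_L -> 'I_K -> 'cV[C]_tau) (l : 'I_L) (k : 'I_K)
    : C :=
  M%:R * beta l l k
  - M%:R * beta l l k ^+ 2 * p l k
    * qform (psi l k) (invmx (Dmat sigma2 beta p psi l)) (psi l k).

Definition WSMSE (L K tau M : nat) (sigma2 : C) (beta : 'I_L -> 'I_L -> 'I_K -> C)
    (alpha : 'I_L -> 'I_K -> C)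
    (p : 'I_L -> 'I_K -> C) (psi : 'I_L -> 'I_K -> 'cV[C]_tau) : C :=
  \sum_(l < L) \sum_(k < K) alpha l k * MSE M sigma2 beta p psi l k.

Definition fobj (L K tau : nat) (sigma2 : C) (beta : 'I_L -> 'I_L -> 'I_K -> C)
    (alpha : 'I_L -> 'I_K -> C)
    (p : 'I_L -> 'I_K -> C) (psi : 'I_L -> 'I_K -> 'cV[C]_tau)
    (mu : 'I_L -> 'I_K -> 'cV[C]_tau) : C :=
  \sum_(l < L) \sum_(k < K) alpha l k *
     (2 * beta l l k * sqrtC (p l k) * 'Re ((hermT (mu l k) *m psi l k) 0 0)
      - qform (mu l k) (Dmat sigma2 beta p psi l) (mu l k)).

Definition mu_update (L K tau : nat) (sigma2 : C) (beta : 'I_L -> 'I_L -> 'I_K -> C)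
    (p : 'I_L -> 'I_K -> C) (psi : 'I_L -> 'I_K -> 'cV[C]_tau)
    : 'I_L -> 'I_K -> 'cV[C]_tau :=
  fun l k => (beta l l k * sqrtC (p l k)) *: (invmx (Dmat sigma2 beta p psi l) *m psi l k).

End Pilot.

From Pilot Require Import Defs.
From HB Require Import structures.
From mathcomp Require Import all_boot all_order all_algebra.
From mathcomp Require Import ring.
Set Implicit Arguments. Unset Strict Implicit. Unset Printing Implicit Defensive.
Import Order.TTheory GRing.Theory Num.Theory.
Local Open Scope ring_scope.

(* The proof rests on the variational ("completing the square") description
   of a quadratic form with inverse matrix: for a Hermitian positive definite
   matrix D and any vectors y, mu,
       2 Re (mu^H y) - mu^H D mu  <=  y^H D^-1 y,
   with equality at mu = D^-1 y.  Applied per user with y = beta_llk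
   sqrt(p_lk) psi_lk and D = D_l (which is positive definite since
   sigma^2 > 0), it shows f(p, psi, mu) <= G(p, psi) for every mu, with
   equality at the update mu(p, psi), where G = sum alpha_lk beta_llk^2 p_lk
   psi_lk^H D_l^-1 psi_lk.  Since WSMSE = const - M G, one step of the
   iteration gives
       G(t+1) >= f(t+1, mu(t)) >= f(t, mu(t)) = G(t),
   the middle inequality being the maximality of (p(t+1), psi(t+1)). *)

Section ConjugateTranspose.
Variable C : numClosedFieldType.

Lemma hermTM m n p (A : 'M[C]_(m, n)) (B : 'M[C]_(n, p)) :
  hermT (A *m B) = hermT B *m hermT A.
Proof. by rewrite /hermT map_mxM trmx_mul. Qed.

Lemma hermTK m n (A : 'M[C]_(m, n)) : hermT (hermT A) = A.
Proof. by apply/matrixP => i j; rewrite /hermT !mxE conjCK. Qed.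

Lemma hermTD m n (A B : 'M[C]_(m, n)) : hermT (A + B) = hermT A + hermT B.
Proof. by rewrite /hermT map_mxD linearD. Qed.

Lemma hermTB m n (A B : 'M[C]_(m, n)) : hermT (A - B) = hermT A - hermT B.
Proof. by rewrite /hermT map_mxB linearB. Qed.

Lemma hermTZ m n a (A : 'M[C]_(m, n)) : hermT (a *: A) = a^* *: hermT A.
Proof. by apply/matrixP => i j; rewrite /hermT !mxE rmorphM. Qed.

Lemma hermT0 m n : hermT (0 : 'M[C]_(m, n)) = 0.
Proof. by rewrite /hermT map_mx0 trmx0. Qed.

Lemma hermT_sum m n I (r : seq I) (F : I -> 'M[C]_(m, n)) :
  hermT (\sum_(i <- r) F i) = \sum_(i <- r) hermT (F i).
Proof. by rewrite /hermT map_mx_sum linear_sum. Qed.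

Lemma hermT_scalar n a : hermT (a%:M : 'M[C]_n) = a^*%:M.
Proof. by rewrite /hermT map_scalar_mx tr_scalar_mx. Qed.

End ConjugateTranspose.

Section InnerProduct.
Variable C : numClosedFieldType.

Lemma twice_Re (w : C) : 2 * 'Re w = w + w^*.
Proof. by rewrite ReE mulrC divfK // pnatr_eq0. Qed.

Definition dot n (u v : 'cV[C]_n) : C := (hermT u *m v) 0 0.

Lemma dotE n (u v : 'cV[C]_n) : dot u v = \sum_i (u i 0)^* * v i 0.
Proof. by rewrite /dot mxE; apply: eq_bigr => i _; rewrite /hermT !mxE. Qed.

Lemma qformE n (u v : 'cV[C]_n) A : qform u A v = dot u (A *m v).
Proof. by rewrite /qform /dot mulmxA. Qed.

Lemma dot_conj n (u v : 'cV[C]_n) : (dot u v)^* = dot v u.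
Proof.
rewrite !dotE rmorph_sum; apply: eq_bigr => i _.
by rewrite rmorphM /= conjCK mulrC.
Qed.

Lemma dot0r n (u : 'cV[C]_n) : dot u 0 = 0.
Proof. by rewrite /dot mulmx0 mxE. Qed.

Lemma dotBl n (u v w : 'cV[C]_n) : dot (u - v) w = dot u w - dot v w.
Proof. by rewrite /dot hermTB mulmxBl !mxE. Qed.

Lemma dotBr n (u v w : 'cV[C]_n) : dot w (u - v) = dot w u - dot w v.
Proof. by rewrite /dot mulmxBr !mxE. Qed.

Lemma dotZl n (u v : 'cV[C]_n) a : dot (a *: u) v = a^* * dot u v.
Proof. by rewrite /dot hermTZ -scalemxAl mxE. Qed.

Lemma dotZr n (u v : 'cV[C]_n) a : dot u (a *: v) = a * dot u v.
Proof. by rewrite /dot -scalemxAr mxE. Qed.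

Lemma dotDr n (u v w : 'cV[C]_n) : dot w (u + v) = dot w u + dot w v.
Proof. by rewrite /dot mulmxDr mxE. Qed.

Lemma dot_sumr n I (r : seq I) (u : 'cV[C]_n) (F : I -> 'cV[C]_n) :
  dot u (\sum_(i <- r) F i) = \sum_(i <- r) dot u (F i).
Proof. exact: (big_morph _ (fun x y => dotDr x y u) (dot0r u)). Qed.

Lemma dot_adjoint m n (A : 'M[C]_(m, n)) (u : 'cV[C]_m) (v : 'cV[C]_n) :
  dot u (A *m v) = dot (hermT A *m u) v.
Proof. by rewrite /dot hermTM hermTK mulmxA. Qed.

Lemma dot_ge0 n (u : 'cV[C]_n) : 0 <= dot u u.
Proof. by rewrite dotE sumr_ge0 // => i _; rewrite mulrC mul_conjC_ge0. Qed.

Lemma dot_gt0 n (u : 'cV[C]_n) : u != 0 -> 0 < dot u u.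
Proof.
move=> u_neq0; rewrite lt_def dot_ge0 andbT dotE.
apply: contra u_neq0; rewrite psumr_eq0 => [/allP u_eq0|i _]; last first.
  by rewrite mulrC mul_conjC_ge0.
apply/eqP/matrixP => i j; rewrite ord1 mxE.
by apply/eqP; rewrite -mul_conjC_eq0 mulrC; apply: u_eq0; rewrite mem_index_enum.
Qed.

End InnerProduct.

Section PositiveDefinite.
Variable C : numClosedFieldType.

Definition posdef n (D : 'M[C]_n) : Prop :=
  hermT D = D /\ forall z, z != 0 -> 0 < dot z (D *m z).

Variables (n : nat) (D : 'M[C]_n).
Hypothesis D_posdef : posdef D.

Lemma posdef_ge0 z : 0 <= dot z (D *m z).
Proof.
have [-> | z_neq0] := eqVneq z 0; last exact/ltW/D_posdef.2.
by rewrite mulmx0 dot0r.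
Qed.

(* A positive definite matrix has trivial kernel, hence is invertible. *)
Lemma posdef_unit : D \in unitmx.
Proof.
rewrite unitmxE unitfE; apply/negP => /det0P [v v_neq0 vD].
have Dv : D *m hermT v = 0 by rewrite -D_posdef.1 -hermTM vD hermT0.
have hv_neq0 : hermT v != 0.
  by apply: contra v_neq0 => /eqP hv0; rewrite -(hermTK v) hv0 hermT0.
by have := D_posdef.2 _ hv_neq0; rewrite Dv dot0r ltxx.
Qed.

Lemma completing_square x mu :
  2 * 'Re (dot mu (D *m x)) - dot mu (D *m mu)
  = dot x (D *m x) - dot (mu - x) (D *m (mu - x)).
Proof.
have xDmu : dot x (D *m mu) = (dot mu (D *m x))^*.
  by rewrite dot_conj dot_adjoint D_posdef.1.
rewrite mulmxBr dotBl !dotBr xDmu twice_Re; ring.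
Qed.

(* For Hermitian nonnegative D, the form (D x)^H x = x^H D x is real. *)
Lemma dot_posdef_sym x : dot (D *m x) x = dot x (D *m x).
Proof. by rewrite -dot_conj conj_Creal // ger0_real ?posdef_ge0. Qed.

Lemma quadratic_bound y mu :
  2 * 'Re (dot mu y) - dot mu (D *m mu) <= dot y (invmx D *m y).
Proof.
set x := invmx D *m y; have Dx : D *m x = y by rewrite mulKVmx ?posdef_unit.
rewrite -{1}Dx completing_square -Dx dot_posdef_sym.
by rewrite lerBlDr lerDl posdef_ge0.
Qed.

Lemma quadratic_bound_attained y :
  let mu := invmx D *m y in
  2 * 'Re (dot mu y) - dot mu (D *m mu) = dot y (invmx D *m y).
Proof.
move=> mu; have Dmu : D *m mu = y by rewrite mulKVmx ?posdef_unit.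
rewrite -/mu -{1}Dmu completing_square subrr mulmx0 dot0r subr0.
by rewrite -[in RHS]Dmu dot_posdef_sym.
Qed.

Lemma scaled_quadratic_bound (c : C) (psi mu : 'cV[C]_n) : 0 <= c ->
  2 * c * 'Re (dot mu psi) - qform mu D mu <= c ^+ 2 * qform psi (invmx D) psi.
Proof.
move=> /ger0_real c_real; have ReZ w : 'Re (c * w) = c * 'Re w by exact: ReMl.
have := quadratic_bound (c *: psi) mu.
rewrite dotZr ReZ mulrA -scalemxAr dotZr dotZl !qformE.
by rewrite conj_Creal // mulrA -expr2.
Qed.

Lemma scaled_quadratic_bound_attained (c : C) (psi : 'cV[C]_n) : 0 <= c ->
  let mu := c *: (invmx D *m psi) in
  2 * c * 'Re (dot mu psi) - qform mu D mu = c ^+ 2 * qform psi (invmx D) psi.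
Proof.
move=> /ger0_real c_real mu; have ReZ w : 'Re (c * w) = c * 'Re w by exact: ReMl.
have /= := quadratic_bound_attained (c *: psi).
rewrite -scalemxAr -/mu dotZr ReZ mulrA dotZl [dot psi mu]dotZr !qformE.
by rewrite conj_Creal // mulrA -expr2.
Qed.

End PositiveDefinite.

Section CovarianceMatrix.
Variables (C : numClosedFieldType) (L K tau : nat) (sigma2 : C)
  (beta : 'I_L -> 'I_L -> 'I_K -> C) (p : 'I_L -> 'I_K -> C)
  (psi : 'I_L -> 'I_K -> 'cV[C]_tau) (l : 'I_L).

Lemma dot_Dmat (z : 'cV[C]_tau) :
  dot z (Dmat sigma2 beta p psi l *m z) =
  sigma2 * dot z z + \sum_(i < L) \sum_(j < K)
     (beta l i j * p i j) * (dot z (psi i j) * (dot z (psi i j))^*).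
Proof.
rewrite /Dmat mulmxDl mul_scalar_mx dotDr dotZr; congr (_ + _).
rewrite mulmx_suml dot_sumr; apply: eq_bigr => i _.
rewrite mulmx_suml dot_sumr; apply: eq_bigr => j _.
rewrite -scalemxAl dotZr dot_conj; congr (_ * _).
by rewrite /dot -mulmxA mulmxA mxE big_ord1.
Qed.

Lemma Dmat_posdef : 0 < sigma2 -> (forall i j, 0 <= beta l i j * p i j) ->
  posdef (Dmat sigma2 beta p psi l).
Proof.
move=> sigma2_gt0 w_ge0; split.
  rewrite /Dmat hermTD hermT_scalar conj_Creal ?gtr0_real //; congr (_ + _).
  rewrite hermT_sum; apply: eq_bigr => i _; rewrite hermT_sum; apply: eq_bigr => j _.
  by rewrite hermTZ hermTM hermTK conj_Creal ?ger0_real.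
move=> z z_neq0; rewrite dot_Dmat ltr_wpDr ?mulr_gt0 ?dot_gt0 //.
by do 2![apply: sumr_ge0 => ? _]; rewrite mulr_ge0 ?mul_conjC_ge0.
Qed.

End CovarianceMatrix.

Section ObjectiveBound.
Variables (C : numClosedFieldType) (L K tau M : nat) (sigma2 : C)
  (beta : 'I_L -> 'I_L -> 'I_K -> C) (alpha : 'I_L -> 'I_K -> C).
Hypothesis sigma2_gt0 : 0 < sigma2.
Hypothesis beta_gt0 : forall l i j, 0 < beta l i j.
Hypothesis alpha_gt0 : forall l k, 0 < alpha l k.

Definition mse_reduction (p : 'I_L -> 'I_K -> C) (psi : 'I_L -> 'I_K -> 'cV[C]_tau) : C :=
  \sum_(l < L) \sum_(k < K) alpha l k * ((beta l l k * sqrtC (p l k)) ^+ 2 *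
     qform (psi l k) (invmx (Dmat sigma2 beta p psi l)) (psi l k)).

Variables (p : 'I_L -> 'I_K -> C) (psi : 'I_L -> 'I_K -> 'cV[C]_tau).
Hypothesis p_ge0 : forall l k, 0 <= p l k.

(* Feasibility enters only through p >= 0, which gives these two facts. *)
Let D_posdef l : posdef (Dmat sigma2 beta p psi l).
Proof. by apply: Dmat_posdef => // i j; rewrite mulr_ge0 ?p_ge0 ?ltW. Qed.

Let amplitude_ge0 l k : 0 <= beta l l k * sqrtC (p l k).
Proof. by rewrite mulr_ge0 ?sqrtC_ge0 ?p_ge0 ?ltW. Qed.

Lemma WSMSE_mse_reduction : WSMSE M sigma2 beta alpha p psi =
  \sum_(l < L) \sum_(k < K) alpha l k * (M%:R * beta l l k) - M%:R * mse_reduction p psi.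
Proof.
rewrite /WSMSE /mse_reduction mulr_sumr -sumrB; apply: eq_bigr => l _.
rewrite mulr_sumr -sumrB; apply: eq_bigr => k _.
rewrite /MSE exprMn sqrtCK; ring.
Qed.

Lemma fobj_le_mse_reduction mu : fobj sigma2 beta alpha p psi mu <= mse_reduction p psi.
Proof.
rewrite /fobj /mse_reduction; apply: ler_sum => l _; apply: ler_sum => k _.
rewrite ler_pM2l ?alpha_gt0 //.
by rewrite -(mulrA 2) scaled_quadratic_bound ?D_posdef ?amplitude_ge0.
Qed.

Lemma fobj_mu_update :
  fobj sigma2 beta alpha p psi (mu_update sigma2 beta p psi) = mse_reduction p psi.
Proof.
rewrite /fobj /mse_reduction; apply: eq_bigr => l _; apply: eq_bigr => k _; congr (_ * _).
by rewrite -(mulrA 2) scaled_quadratic_bound_attained ?D_posdef ?amplitude_ge0.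
Qed.

End ObjectiveBound.

Unset Implicit Arguments.

Theorem proposition4 (C : numClosedFieldType) (L K tau M : nat)
  (sigma2 Pmax : C) (beta : 'I_L -> 'I_L -> 'I_K -> C) (alpha : 'I_L -> 'I_K -> C)
  (phi : 'I_tau -> 'cV[C]_tau)
  (pseq : nat -> 'I_L -> 'I_K -> C) (psiseq : nat -> 'I_L -> 'I_K -> 'cV[C]_tau) :
  (K <= tau)%N ->
  0 < sigma2 -> 0 < Pmax ->
  (forall l i j, 0 < beta l i j) ->
  (forall l k, 0 < alpha l k) ->
  pilot_basis phi ->
  feasible Pmax phi (pseq 0%N) (psiseq 0%N) ->
  (forall t : nat,
     feasible Pmax phi (pseq t.+1) (psiseq t.+1) /\
     forall p psi, feasible Pmax phi p psi ->
       fobj sigma2 beta alpha p psi (mu_update sigma2 beta (pseq t) (psiseq t))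
       <= fobj sigma2 beta alpha (pseq t.+1) (psiseq t.+1)
            (mu_update sigma2 beta (pseq t) (psiseq t))) ->
  forall t : nat,
    WSMSE M sigma2 beta alpha (pseq t.+1) (psiseq t.+1)
    <= WSMSE M sigma2 beta alpha (pseq t) (psiseq t).
Proof.
move=> _ sigma2_gt0 _ beta_gt0 alpha_gt0 _ feasible0 step t.
have feasible_t s : feasible Pmax phi (pseq s) (psiseq s).
  by case: s => [|s]; [exact: feasible0 | exact: (step s).1].
have p_ge0 s l k : 0 <= pseq s l k by exact: ((feasible_t s).1 l k).1.
rewrite !WSMSE_mse_reduction.
rewrite lerD2l lerN2 ler_wpM2l ?ler0n //.
(* G(t) = f(t, mu(t)) <= f(t+1, mu(t)) <= G(t+1) *)
rewrite -(fobj_mu_update alpha sigma2_gt0 beta_gt0 (psiseq t) (p_ge0 t)).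
apply: le_trans ((step t).2 _ _ (feasible_t t)) _.
exact: (fobj_le_mse_reduction sigma2_gt0 beta_gt0 alpha_gt0 (psiseq t.+1) (p_ge0 t.+1)).
Qed.
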